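(* Let $G=(V,E,\gamma,c)$ be a typed DAG task executed on a platform with $M_s\ge1$ cores of each type $s\in S$ under a work-conserving scheduling algorithm. Let $\pi=(\tau_1,\dots,\tau_k)$ be a critical path of an arbitrary execution sequence of $G$ with finish times $f(\cdot)$. Set $f(\tau_0):=0$; for $1\le i\le k$ let $y_i$ be the total length of the time within $[f(\tau_{i-1}),f(\tau_i))$ during which $\tau_i$ is not executing, and for $s\in S$ let $\mathcal{Y}_s=\sum_{i:\gamma(\tau_i)=s}y_i$. Then for every $s\in S$, \[ \mathcal{Y}_s\le \frac{1}{M_s}\sum_{v\in \mathrm{ivs}(\pi,s)}c(v). \]
   Context: A typed DAG task is $G=(V,E,\gamma,c)$ where $(V,E)$ is a finite directed acyclic graph with a unique source $v_{src}$ and a unique sink $v_{snk}$, $S$ is a finite set of core types, $\gamma:V\to S$ gives the type of each vertex, and $c:V\to\mathbb{R}_{\ge0}$ gives the WCET of each vertex. The platform has $M_s\ge1$ cores of type $s$. $\mathrm{pre}(u)$, $\mathrm{ans}(u)$, $\mathrm{des}(u)$ denote the (immediate) predecessors, ancestors and descendants of $u$. A complete path is a path from $v_{src}$ to $v_{snk}$. For $v\in V$, $\mathrm{par}(v)=\{u\in V: u\ne v,\ \gamma(u)=\gamma(v),\ u\notin \mathrm{ans}(v)\cup\mathrm{des}(v)\}$. For a path $\pi=(\tau_1,\dots,\tau_k)$ and $s\in S$, $\mathrm{ivs}(\pi,s)=\bigcup_{i:\gamma(\tau_i)=s}\mathrm{par}(\tau_i)$. Runtime model: a vertex becomes eligible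 when all its predecessors have finished (the source at time $0$); a vertex $v$ may only execute on cores of type $\gamma(v)$, one core at a time, for a total of at most $c(v)$ time units. Scheduling is work-conserving: an eligible unfinished vertex of type $s$ must be executing whenever some core of type $s$ is available. An execution sequence is a resulting trace; $f(v)$ is the finish time of $v$. A critical path of an execution sequence is a complete path $(\tau_1,\dots,\tau_k)$ with $f(\tau_{i-1})=\max_{u\in\mathrm{pre}(\tau_i)}f(u)$ for all $2\le i\le k$. *)

From mathcomp Require Import all_boot all_order all_algebra.
Set Implicit Arguments. Unset Strict Implicit. Unset Printing Implicit Defensive.
Import Order.TTheory GRing.Theory Num.Theory.
Local Open Scope ring_scope.

Section TypedDAG.
Variables (R : realFieldType) (V S : finType).
Variables (E : rel V) (gamma : V -> S) (c : V -> R) (M : S -> nat).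

Definition acyclic := forall u v, E u v -> ~~ connect E v u.
Definition unique_source (src : V) := forall v, (forall u, ~~ E u v) <-> v = src.
Definition unique_sink (snk : V) := forall v, (forall u, ~~ E v u) <-> v = snk.

Definition typed_dag_task (src snk : V) :=
  [/\ acyclic, unique_source src, unique_sink snk & forall v, 0 <= c v].

Definition par (v : V) : {set V} :=
  [set u | [&& u != v, gamma u == gamma v, ~~ connect E u v & ~~ connect E v u]].

(* An execution sequence consists of n consecutive time segments
   [seg_start j, seg_end j) (starting at time 0) of lengths d j > 0, with X j the
   set of vertices executing (each on one core) during segment j, and finish
   times f. *)
Section Exec.
Variables (n : nat) (d : 'I_n -> R) (X : 'I_n -> {set V}) (f : V -> R).

Definition seg_start (j : 'I_n) : R := \sum_(i < n | (i < j)%N) d i.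
Definition seg_end (j : 'I_n) : R := seg_start j + d j.

Definition ready (v : V) : R := \big[Num.max/0]_(u | E u v) f u.

Definition load (j : 'I_n) (s : S) : nat := #|[set v in X j | gamma v == s]|.

Definition work_conserving :=
  forall (j : 'I_n) (t : R) (v : V),
    seg_start j <= t < seg_end j -> ready v <= t < f v -> v \notin X j ->
    (M (gamma v) <= load j (gamma v))%N.

Definition execution_sequence :=
  [/\ forall j, 0 < d j,
      (* at most M_s cores of type s; vertices only run on their own type *)
      forall j s, (load j s <= M s)%N,
      forall j v, v \in X j -> ready v <= seg_start j /\ seg_end j <= f v,
      forall v, \sum_(j | v \in X j) d j <= c v &
      (* f v is the finish time: the end of its last execution, or its
         eligibility time if it executes for zero time *)
      forall v, f v = ready v \/ exists j, v \in X j /\ f v = seg_end j]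
  /\ work_conserving.

Definition critical_path (src snk : V) (k : nat) (tau : nat -> V) :=
  [/\ (1 <= k)%N, tau 1%N = src, tau k = snk,
      forall i, (1 <= i < k)%N -> E (tau i) (tau i.+1)
    & forall i, (2 <= i <= k)%N -> f (tau i.-1) = ready (tau i)].

Definition overlap (a b a' b' : R) : R := Num.max 0 (Num.min b b' - Num.max a a').

Definition idle_len (a b : R) (v : V) : R :=
  Num.max 0 (b - a) -
  \sum_(j < n | v \in X j) overlap a b (seg_start j) (seg_end j).

Definition fpath (tau : nat -> V) (i : nat) : R := if i is 0 then 0 else f (tau i).

Definition y_len (tau : nat -> V) (i : nat) : R :=
  idle_len (fpath tau i.-1) (fpath tau i) (tau i).

Definition Y_type (k : nat) (tau : nat -> V) (s : S) : R :=
  \sum_(1 <= i < k.+1 | gamma (tau i) == s) y_len tau i.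

Definition ivs (k : nat) (tau : nat -> V) (s : S) : {set V} :=
  \bigcup_(1 <= i < k.+1 | gamma (tau i) == s) par (tau i).

End Exec.
End TypedDAG.

(* Let tau_i be a vertex of type s on the critical path. During
   [f(tau_{i-1}), f(tau_i)) = [ready(tau_i), f(tau_i)) it is eligible and unfinished, so
   whenever it does not run, work conservation keeps all M_s cores of type s busy.  Each
   vertex they run is parallel to tau_i: an ancestor finished before tau_i became eligible,
   and a descendant cannot start before tau_i finishes.  Hence M_s y_i is at most the
   processor time spent by ivs(pi, s) inside that interval.  The intervals are disjoint for
   distinct i, so M_s Y_s is at most the total execution time of ivs(pi, s), which the
   WCETs bound. *)

From Pilot Require Import Defs.
From mathcomp Require Import all_boot all_order all_algebra.
From mathcomp Require Import lra.
Import Order.TTheory GRing.Theory Num.Theory.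
Set Implicit Arguments. Unset Strict Implicit. Unset Printing Implicit Defensive.
Local Open Scope ring_scope.

Section Overlap.
Variable R : realFieldType.
Implicit Types a b p q x : R.

Definition clamp a b x : R := Num.min b (Num.max a x).

Lemma clamp_itv a b x : a <= b -> a <= clamp a b x <= b.
Proof. by move=> ab; rewrite /clamp le_min ab le_max lexx ge_min lexx. Qed.

Lemma overlap_ge0 a b p q : 0 <= overlap a b p q.
Proof. by rewrite /overlap le_max lexx. Qed.

Lemma overlapC a b p q : overlap a b p q = overlap p q a b.
Proof. by rewrite /overlap (minC b) (maxC a). Qed.

(* The length of [p,q) inside [a,b) is the increment of the clamp to [a,b]
   (a constant clamp when b < a). *)
Lemma overlap_clamp a b p q : p <= q -> overlap p q a b = clamp a b q - clamp a b p.
Proof.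
move=> pq; rewrite /overlap /clamp.
by case: (leP 0 (Num.min q b - Num.max p a)); case: (leP p a); case: (leP q a);
  case: (leP q b); case: (leP p b); case: (leP a b); move=> *; lra.
Qed.

Lemma overlap_telescope (P : nat -> R) m a b :
  (forall i, (i < m)%N -> P i <= P i.+1) ->
  \sum_(i < m) overlap (P i) (P i.+1) a b = clamp a b (P m) - clamp a b (P 0%N).
Proof.
move=> P_incr; transitivity (\sum_(0 <= i < m) overlap (P i) (P i.+1) a b).
  by rewrite big_mkord.
apply: (@telescope_sumr_eq _ _ _ (fun i => clamp a b (P i))) => // i /andP[_ im].
by rewrite overlap_clamp ?P_incr.
Qed.

Lemma sum_overlap_chain_le (P : nat -> R) (Q : pred nat) m p q :
  (forall i, (i < m)%N -> P i <= P i.+1) -> p <= q ->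
  \sum_(1 <= i < m.+1 | Q i) overlap (P i.-1) (P i) p q <= q - p.
Proof.
move=> P_incr pq.
apply: le_trans (_ : _ <= clamp p q (P m) - clamp p q (P 0%N)) _.
  rewrite -(overlap_telescope _ _ P_incr) big_add1 big_mkord /=.
  rewrite [leRHS](bigID (fun i : 'I_m => Q i.+1)) /= lerDl.
  by rewrite sumr_ge0 // => i _; apply: overlap_ge0.
by have := clamp_itv (P m) pq; have := clamp_itv (P 0%N) pq; lra.
Qed.

Lemma overlap_window a b T : 0 <= a -> (a < b -> b <= T) ->
  Num.max 0 (b - a) <= overlap a b 0 T.
Proof.
move=> a_ge0 bT; rewrite /overlap (max_idPl a_ge0).
case: (ltP a b) => [ab|ba]; first by rewrite (min_idPl (bT ab)).
by rewrite (max_idPl (_ : b - a <= 0)) ?le_max ?lexx // subr_le0.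
Qed.

Lemma overlap_gt0_common a b p q : 0 < overlap a b p q ->
  exists t, [/\ a <= t < b & p <= t < q].
Proof.
rewrite /overlap lt_max ltxx /= subr_gt0 lt_min => /andP[tb tq].
by exists (Num.max a p); rewrite tb tq !le_max !lexx orbT.
Qed.

End Overlap.

Lemma par_sub_ivs (R : realFieldType) (V S : finType) (E : rel V) (gamma : V -> S)
    (k : nat) (tau : nat -> V) i :
  (1 <= i <= k)%N -> par E gamma (tau i) \subset ivs E gamma k tau (gamma (tau i)).
Proof.
move=> ik; rewrite /ivs big_mkcond (bigD1_seq i) ?mem_index_iota ?iota_uniq //=.
by rewrite eqxx subsetUl.
Qed.

Section Schedule.
Variables (R : realFieldType) (V S : finType) (E : rel V) (gamma : V -> S).
Variables (c : V -> R) (M : S -> nat).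
Variables (n : nat) (d : 'I_n -> R) (X : 'I_n -> {set V}) (f : V -> R).

Local Notation ready := (ready E f).
Local Notation seg_start := (seg_start d).
Local Notation seg_end := (seg_end d).

Lemma ready_ge0 v : 0 <= ready v.
Proof. exact: bigmax_ge_id. Qed.

Lemma le_ready u v : E u v -> f u <= ready v.
Proof. exact: le_bigmax_cond. Qed.

Lemma ready_unique_source src : unique_source E src -> ready src = 0.
Proof.
move=> src_unique; rewrite /ready big_pred0 // => u.
exact/negbTE/(proj2 (src_unique src) erefl).
Qed.

Definition elapsed (m : nat) : R := \sum_(l < n | (l < m)%N) d l.

Definition work_in (A : {set V}) (a b : R) : R :=
  \sum_(j < n) #|A :&: X j|%:R * overlap a b (seg_start j) (seg_end j).

Hypothesis d_gt0 : forall j, 0 < d j.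
Hypothesis exec_window :
  forall j v, v \in X j -> ready v <= seg_start j /\ seg_end j <= f v.
Hypothesis finish_time :
  forall v, f v = ready v \/ exists j, v \in X j /\ f v = seg_end j.

Lemma elapsed_mono : {homo elapsed : i j / (i <= j)%N >-> i <= j}.
Proof.
move=> i j ij; rewrite /elapsed [leLHS]big_mkcond [leRHS]big_mkcond.
apply: ler_sum => l _; case: ifP => [li|_]; first by rewrite (leq_trans li ij).
by case: ifP => // _; apply: ltW.
Qed.

Lemma seg_endE j : seg_end j = elapsed j.+1.
Proof.
rewrite /seg_end /seg_start /elapsed [RHS](bigD1 j) //= addrC.
by congr (_ + _); apply: eq_bigl => l; rewrite ltnS ltn_neqAle andbC.
Qed.

Lemma sum_overlap_segments a b :
  \sum_(j < n) overlap a b (seg_start j) (seg_end j) = overlap a b 0 (elapsed n).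
Proof.
transitivity (\sum_(i < n) overlap (elapsed i) (elapsed i.+1) a b).
  by apply: eq_bigr => j _; rewrite overlapC seg_endE.
rewrite overlap_telescope => [|i _]; last exact/elapsed_mono/leqnSn.
have elapsed0 : elapsed 0 = 0 by rewrite /elapsed big_pred0.
rewrite elapsed0 overlapC overlap_clamp // /elapsed sumr_ge0 // => l _.
exact: ltW.
Qed.

Lemma ready_le_finish v : ready v <= f v.
Proof.
case: (finish_time v) => [->//|[j [vXj ->]]].
by apply: le_trans (proj1 (exec_window vXj)) _; rewrite /seg_end lerDl ltW.
Qed.

Lemma finish_le_ready_path u p : path E u p -> p != [::] -> f u <= ready (last u p).
Proof.
elim: p u => //= x p IH u /andP[Eux xp] _.
apply: le_trans (le_ready Eux) _; case: p IH xp => //= y p IH xp.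
exact: le_trans (ready_le_finish x) (IH x xp _).
Qed.

Lemma finish_le_ready u v : connect E u v -> u != v -> f u <= ready v.
Proof.
case/connectP=> [[|x p] up ->]; first by rewrite eqxx.
by move=> _; apply: finish_le_ready_path.
Qed.

Lemma idle_len_le_unexecuted v :
  idle_len d X (ready v) (f v) v <=
  \sum_(j < n | v \notin X j) overlap (ready v) (f v) (seg_start j) (seg_end j).
Proof.
have := sum_overlap_segments (ready v) (f v).
rewrite (bigID (fun j => v \in X j)) /= => split_sum.
have : Num.max 0 (f v - ready v) <= overlap (ready v) (f v) 0 (elapsed n).
  apply: overlap_window (ready_ge0 v) _ => ready_lt_f.
  case: (finish_time v) => [fv|[j [_ ->]]]; first by rewrite fv ltxx in ready_lt_f.
  by rewrite seg_endE; apply: elapsed_mono.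
by rewrite /idle_len; lra.
Qed.

Lemma running_mem_par u v j t : v \in X j -> u \notin X j -> gamma v = gamma u ->
  ready u <= t < f u -> seg_start j <= t < seg_end j -> v \in par E gamma u.
Proof.
move=> vXj uXj gvu /andP[ready_t t_f] /andP[start_t t_end].
have [ready_v end_v] := exec_window vXj.
have vu : v != u by apply: contraNneq uXj => <-.
rewrite inE vu gvu eqxx /=; apply/andP; split; apply/negP => conn.
  by have := finish_le_ready conn vu; lra.
by have := finish_le_ready conn; rewrite eq_sym => /(_ vu); lra.
Qed.

Hypothesis wc : work_conserving E gamma M d X f.

Lemma blocked_load_par u j : u \notin X j ->
  0 < overlap (ready u) (f u) (seg_start j) (seg_end j) ->
  (M (gamma u) <= #|par E gamma u :&: X j|)%N.
Proof.
move=> uXj /overlap_gt0_common[t [u_t j_t]].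
apply: leq_trans (wc j_t u_t uXj) (subset_leq_card _).
apply/subsetP => v; rewrite inE => /andP[vXj /eqP gvu].
by rewrite in_setI vXj andbT (running_mem_par vXj uXj gvu u_t j_t).
Qed.

Lemma idle_len_blocked u (A : {set V}) : par E gamma u \subset A ->
  (M (gamma u))%:R * idle_len d X (ready u) (f u) u <= work_in A (ready u) (f u).
Proof.
move=> parA; rewrite /work_in.
apply: le_trans (ler_wpM2l (ler0n _ _) (idle_len_le_unexecuted u)) _.
rewrite mulr_sumr [leRHS](bigID (fun j => u \notin X j)) /= -[leLHS]addr0 lerD //.
  apply: ler_sum => j uXj.
  set ov := overlap _ _ _ _; case: (lerP ov 0) => [ov_le0|ov_gt0].
    have ov0 : ov = 0 by apply/le_anti; rewrite ov_le0 /ov overlap_ge0.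
    by rewrite ov0 !mulr0.
  rewrite ler_wpM2r ?overlap_ge0 // ler_nat.
  exact: leq_trans (blocked_load_par uXj ov_gt0) (subset_leq_card (setSI _ parA)).
by rewrite sumr_ge0 // => j _; rewrite mulr_ge0 ?overlap_ge0.
Qed.

Hypothesis wcet_bound : forall v, \sum_(j | v \in X j) d j <= c v.

Lemma sum_work_le_wcet (A : {set V}) :
  \sum_(j < n) #|A :&: X j|%:R * d j <= \sum_(v in A) c v.
Proof.
rewrite (eq_bigr (fun j => \sum_(v in A :&: X j) d j)); last first.
  by move=> j _; rewrite sumr_const mulr_natl.
rewrite (exchange_big_dep (mem A)) /=; last by move=> j v _; rewrite inE => /andP[].
apply: ler_sum => v vA; apply: le_trans (wcet_bound v).
by rewrite (eq_bigl (fun j => v \in X j)) // => j; rewrite inE vA.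
Qed.

Variables (src snk : V) (k : nat) (tau : nat -> V).
Hypothesis src_unique : unique_source E src.
Hypothesis tau_critical : critical_path E f src snk k tau.

(* Plain [fpath] would resolve to the notation of path.v. *)
Local Notation fp := (Defs.fpath f tau).

Lemma fpath_pred_ready i : (1 <= i <= k)%N -> fp i.-1 = ready (tau i).
Proof.
case: tau_critical => _ tau1 _ _ tau_ready.
case: i => [|[|i]] // ik; first by rewrite tau1 ready_unique_source.
exact: tau_ready.
Qed.

Lemma fpath_incr i : (i < k)%N -> fp i <= fp i.+1.
Proof.
move=> ik; rewrite (@fpath_pred_ready i.+1) //.
exact: ready_le_finish.
Qed.

Lemma critical_overlap_le (P : pred nat) j :
  \sum_(1 <= i < k.+1 | P i) overlap (fp i.-1) (fp i) (seg_start j) (seg_end j)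
  <= d j.
Proof.
have start_le_end : seg_start j <= seg_end j by rewrite /seg_end lerDl ltW.
apply: le_trans (sum_overlap_chain_le P fpath_incr start_le_end) _.
by rewrite /seg_end addrAC subrr add0r.
Qed.

Lemma sum_work_in_critical_le (P : pred nat) (A : {set V}) :
  \sum_(1 <= i < k.+1 | P i) work_in A (fp i.-1) (fp i) <= \sum_(v in A) c v.
Proof.
rewrite /work_in exchange_big /=; apply: le_trans (sum_work_le_wcet A).
by apply: ler_sum => j _; rewrite -mulr_sumr ler_wpM2l ?critical_overlap_le.
Qed.

Lemma y_len_blocked i (A : {set V}) : (1 <= i <= k)%N -> par E gamma (tau i) \subset A ->
  (M (gamma (tau i)))%:R * y_len d X f tau i <= work_in A (fp i.-1) (fp i).
Proof.
(* Unfolding [fp i.+1] by hand: unification alone is prohibitively slow here. *)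
case: i => // i ik parA; rewrite /y_len fpath_pred_ready // -[fp i.+1]/(f (tau i.+1)).
by have := idle_len_blocked parA.
Qed.

End Schedule.

Theorem lemma2 (R : realFieldType) (V S : finType) (E : rel V)
    (gamma : V -> S) (c : V -> R) (M : S -> nat) (src snk : V)
    (n : nat) (d : 'I_n -> R) (X : 'I_n -> {set V}) (f : V -> R)
    (k : nat) (tau : nat -> V) :
  typed_dag_task E c src snk ->
  (forall s, (1 <= M s)%N) ->
  execution_sequence E gamma c M d X f ->
  critical_path E f src snk k tau ->
  forall s : S,
    Y_type gamma d X f k tau s <=
    (M s)%:R^-1 * \sum_(v in ivs E gamma k tau s) c v.
Proof.
move=> [_ src_unique _ _] M_gt0 [[d_gt0 _ exec_window wcet_bound finish_time] wc] cp s.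
have Ms_gt0 : 0 < (M s)%:R :> R by rewrite ltr0n.
rewrite -(ler_pM2l Ms_gt0) mulrA mulfV ?gt_eqF // mul1r /Y_type mulr_sumr.
apply: le_trans (sum_work_in_critical_le d_gt0 exec_window finish_time wcet_bound
  src_unique cp (fun i => gamma (tau i) == s) _).
rewrite big_nat_cond [leRHS]big_nat_cond; apply: ler_sum => i /andP[ik /eqP tau_s].
rewrite -tau_s; apply: (y_len_blocked d_gt0 exec_window finish_time wc src_unique cp ik).
exact: par_sub_ivs.
Qed.
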